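(* Let $\omega_p\in(-\pi,\pi)\setminus\{0\}$ and let $f_c(z)=\frac{\alpha_cz^2+\beta_cz+1}{z^2+\beta_cz+\alpha_c}$ with real $\alpha_c,\beta_c$ such that $f_c$ is stable with a pair of non-real complex-conjugate poles (equivalently $0<\alpha_c<1$ and $\beta_c^2<4\alpha_c$). Then there exist real $\alpha_r,\beta_r$ such that $f_r(z)=\frac{\alpha_rz^2+\beta_rz+1}{z^2+\beta_rz+\alpha_r}$ is stable with two real poles (equivalently $|\alpha_r|<1$, $|\beta_r|<\alpha_r+1$, $\beta_r^2\ge4\alpha_r$), and $$\theta_{f_c}(\omega_p)=\theta_{f_r}(\omega_p)\ (\mathrm{mod}\ 2\pi)\quad\text{and}\quad\theta_{f_c}'(\omega_p)<\theta_{f_r}'(\omega_p).$$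
   Context: Stable means all poles in the open unit disk; such $f_c,f_r$ are all-pass with $|f(e^{j\omega})|=1$ for all $\omega$. $\theta_f(\omega):=\angle f(e^{j\omega})$ is a continuous choice of argument and $\theta_f'(\omega)$ its derivative with respect to $\omega$. *)

From Stdlib Require Import Reals.
From Coquelicot Require Import Coquelicot.
Open Scope R_scope.

Definition allpass2 (alpha beta : R) (z : C) : C :=
  ((RtoC alpha * z * z + RtoC beta * z + 1) / (z * z + RtoC beta * z + RtoC alpha))%C.

Definition den2 (alpha beta : R) (z : C) : C :=
  (z * z + RtoC beta * z + RtoC alpha)%C.

Definition stable2 (alpha beta : R) : Prop :=
  forall z : C, den2 alpha beta z = 0%C -> Cmod z < 1.

Definition nonreal_poles (alpha beta : R) : Prop :=
  exists z : C, den2 alpha beta z = 0%C /\ Im z <> 0.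

Definition real_poles (alpha beta : R) : Prop :=
  forall z : C, den2 alpha beta z = 0%C -> Im z = 0.

Definition eiw (w : R) : C := (cos w, sin w).

Definition arg_branch (f : C -> C) (theta : R -> R) : Prop :=
  continuity theta /\
  forall w : R, f (eiw w) = (cos (theta w), sin (theta w)).

From Stdlib Require Import Reals Lra.
From Coquelicot Require Import Coquelicot.
Open Scope R_scope.

(* Writing u = (1 + alpha)/(1 - alpha), v = beta/(1 - alpha) and
   K(w) = u cos w + v, the response on the unit circle is
   (K - j sin w)/(K + j sin w), so the phase is -2 arg (K + j sin w) and
   its derivative is -2 (K cos w + u sin^2 w)/(K^2 + sin^2 w).  Stability
   means |v| < u; the poles are non-real iff v^2 < u^2 - 1 and form a real
   double pole iff v^2 = u^2 - 1.  Keep K(wp) fixed and decrease u until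
   (u, K(wp) - u cos wp) meets the curve v^2 = u^2 - 1 (intermediate value
   theorem): the phase at wp is unchanged and, as sin wp <> 0, the phase
   derivative strictly increases. *)

Lemma cos_sq_add_sin_sq (w : R) : cos w * cos w + sin w * sin w = 1.
Proof. pose proof (sin2_cos2 w); unfold Rsqr in *; lra. Qed.

Lemma cos_sin_eq_2PI (a b : R) :
  cos a = cos b -> sin a = sin b -> exists k : Z, a - b = 2 * PI * IZR k.
Proof.
  intros Hc Hs.
  assert (Hcos : cos (a - b) = 1).
  { rewrite cos_minus, Hc, Hs; apply cos_sq_add_sin_sq. }
  assert (Hsin : sin ((a - b) / 2) = 0).
  { replace (a - b) with (2 * ((a - b) / 2)) in Hcos by field.
    rewrite cos_2a_sin in Hcos; nra. }
  destruct (sin_eq_0_0 _ Hsin) as [k Hk]; exists k; lra.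
Qed.

Lemma sin_neq_0_lt_PI (w : R) : -PI < w < PI -> w <> 0 -> sin w <> 0.
Proof.
  intros Hw Hw0; destruct (Rlt_or_le 0 w).
  - apply Rgt_not_eq, sin_gt_0; lra.
  - apply Rlt_not_eq, sin_lt_0_var; lra.
Qed.

Lemma derivable_pt_lim_asin_0 : derivable_pt_lim asin 0 1.
Proof.
  assert (H01 : -1 < 0 < 1) by lra.
  apply (derive_pt_eq_1 _ _ _ (derivable_pt_asin 0 H01)).
  rewrite derive_pt_asin, Rsqr_0, Rminus_0_r, sqrt_1; field.
Qed.

Lemma derivable_pt_lim_angle (th X Y : R -> R) (w0 dX dY : R) :
  continuity_pt th w0 ->
  (forall w, cos (th w) = X w /\ sin (th w) = Y w) ->
  derivable_pt_lim X w0 dX -> derivable_pt_lim Y w0 dY ->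
  derivable_pt_lim th w0 (X w0 * dY - Y w0 * dX).
Proof.
  intros Hcont Hcs HX HY; apply is_derive_Reals in HX, HY; apply is_derive_Reals.
  set (G := fun w => Y w * X w0 - X w * Y w0).
  assert (HG : derivable_pt_lim G w0 (X w0 * dY - Y w0 * dX)).
  { apply is_derive_Reals; unfold G; auto_derive.
    - repeat split; [exists dY | exists dX]; assumption.
    - change (Derive (fun x => Y x) w0) with (Derive Y w0).
      change (Derive (fun x => X x) w0) with (Derive X w0).
      rewrite (is_derive_unique _ _ _ HX), (is_derive_unique _ _ _ HY); ring. }
  (* G w = sin (th w - th w0), so th = th w0 + asin o G wherever th is close to th w0 *)
  apply (is_derive_ext_loc (fun w => th w0 + asin (G w))).
  - assert (Hnear := proj1 (continuity_pt_locally _ _) Hcont (mkposreal 1 Rlt_0_1)).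
    revert Hnear; apply filter_imp; simpl; intros w Hw.
    assert (HsG : G w = sin (th w - th w0)).
    { unfold G; rewrite sin_minus.
      destruct (Hcs w) as [-> ->], (Hcs w0) as [-> ->]; ring. }
    rewrite HsG, asin_sin; [ring|].
    apply Rabs_lt_between in Hw; pose proof PI2_1; lra.
  - apply is_derive_Reals.
    rewrite <- (Rplus_0_l (X w0 * dY - Y w0 * dX)), <- (Rmult_1_l (X w0 * dY - Y w0 * dX)).
    apply (derivable_pt_lim_plus (fun _ => th w0) (comp asin G));
      [apply derivable_pt_lim_const | apply derivable_pt_lim_comp; [exact HG|]].
    replace (G w0) with 0 by (unfold G; ring); apply derivable_pt_lim_asin_0.
Qed.

(* [phasor a b] is (a - j b)/(a + j b). *)
Definition phasor (a b : R) : C :=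
  ((a * a - b * b) / (a * a + b * b), -2 * (a * b) / (a * a + b * b)).

Lemma phasor_scale (k a b : R) : k <> 0 -> phasor (k * a) (k * b) = phasor a b.
Proof.
  intros Hk; unfold phasor.
  destruct (Req_dec (a * a + b * b) 0) as [H0 | H0].
  - assert (a = 0 /\ b = 0) as [-> ->] by nra; f_equal; unfold Rdiv; ring.
  - assert (HkN : k * a * (k * a) + k * b * (k * b) <> 0).
    { replace (k * a * (k * a) + k * b * (k * b)) with ((k * k) * (a * a + b * b)) by ring.
      apply Rmult_integral_contrapositive; split; [apply Rmult_integral_contrapositive |]; tauto. }
    f_equal; field; split; assumption.
Qed.

Lemma derivable_pt_lim_phasor_angle (th a b : R -> R) (w0 da db : R) :
  continuity_pt th w0 ->
  (forall w, (cos (th w), sin (th w)) = phasor (a w) (b w)) ->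
  a w0 * a w0 + b w0 * b w0 <> 0 ->
  derivable_pt_lim a w0 da -> derivable_pt_lim b w0 db ->
  derivable_pt_lim th w0 (-2 * (a w0 * db - b w0 * da) / (a w0 * a w0 + b w0 * b w0)).
Proof.
  intros Hcont Hth HN Ha Hb; apply is_derive_Reals in Ha, Hb.
  set (X := fun w => fst (phasor (a w) (b w))).
  set (Y := fun w => snd (phasor (a w) (b w))).
  evar (dX : R); evar (dY : R).
  assert (HX : derivable_pt_lim X w0 dX).
  { apply is_derive_Reals; unfold X, phasor; simpl; auto_derive.
    - repeat split; try (eexists; eassumption); exact HN.
    - change (Derive (fun x => a x) w0) with (Derive a w0).
      change (Derive (fun x => b x) w0) with (Derive b w0).
      rewrite (is_derive_unique _ _ _ Ha), (is_derive_unique _ _ _ Hb).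
      unfold dX; reflexivity. }
  assert (HY : derivable_pt_lim Y w0 dY).
  { apply is_derive_Reals; unfold Y, phasor; simpl; auto_derive.
    - repeat split; try (eexists; eassumption); exact HN.
    - change (Derive (fun x => a x) w0) with (Derive a w0).
      change (Derive (fun x => b x) w0) with (Derive b w0).
      rewrite (is_derive_unique _ _ _ Ha), (is_derive_unique _ _ _ Hb).
      unfold dY; reflexivity. }
  replace (-2 * (a w0 * db - b w0 * da) / (a w0 * a w0 + b w0 * b w0))
    with (X w0 * dY - Y w0 * dX) by (unfold X, Y, dX, dY, phasor; simpl; field; exact HN).
  apply derivable_pt_lim_angle; [exact Hcont | | exact HX | exact HY].
  intros w; unfold X, Y; rewrite <- Hth; split; reflexivity.
Qed.

Lemma allpass2_eiw (alpha beta w : R) :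
  let A := (1 + alpha) * cos w + beta in
  let B := (1 - alpha) * sin w in
  A * A + B * B <> 0 -> allpass2 alpha beta (eiw w) = phasor A B.
Proof.
  intros A B HN.
  pose proof (cos_sq_add_sin_sq w) as Hw.
  assert (Hw' : alpha * (cos w * cos w + sin w * sin w) = alpha) by (rewrite Hw; ring).
  (* numerator and denominator are e^{jw} (A - jB) and e^{jw} (A + jB) *)
  assert (Hnum : (RtoC alpha * eiw w * eiw w + RtoC beta * eiw w + 1 = eiw w * (A, - B)%R)%C).
  { unfold eiw, A, B, Cmult, Cplus, RtoC; simpl; f_equal; lra. }
  assert (Hden : (eiw w * eiw w + RtoC beta * eiw w + RtoC alpha = eiw w * (A, B))%C).
  { unfold eiw, A, B, Cmult, Cplus, RtoC; simpl; f_equal; lra. }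
  assert (Heiw : eiw w <> 0%C).
  { intros E; injection E; intros Hs Hc; rewrite Hs, Hc in Hw; lra. }
  assert (HAB : ((A, B) : C) <> 0).
  { intros E; injection E; intros -> ->; apply HN; ring. }
  unfold allpass2; rewrite Hnum, Hden.
  replace (eiw w * (A, - B)%R / (eiw w * (A, B)))%C with ((A, - B)%R / (A, B))%C
    by (field; split; assumption).
  unfold phasor, Cdiv, Cmult, Cinv; simpl; f_equal; field; exact HN.
Qed.

Definition ucoord (alpha : R) : R := (1 + alpha) / (1 - alpha).
Definition vcoord (alpha beta : R) : R := beta / (1 - alpha).

Lemma allpass2_eiw_coords (alpha beta w : R) :
  alpha <> 1 ->
  let K := ucoord alpha * cos w + vcoord alpha beta in
  K * K + sin w * sin w <> 0 -> allpass2 alpha beta (eiw w) = phasor K (sin w).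
Proof.
  intros Hal K HN.
  assert (Hal' : 1 - alpha <> 0) by lra.
  assert (HA : (1 + alpha) * cos w + beta = (1 - alpha) * K)
    by (unfold K, ucoord, vcoord; field; exact Hal').
  rewrite allpass2_eiw, HA; [apply phasor_scale; exact Hal' |].
  rewrite HA.
  replace ((1 - alpha) * K * ((1 - alpha) * K) + (1 - alpha) * sin w * ((1 - alpha) * sin w))
    with (((1 - alpha) * (1 - alpha)) * (K * K + sin w * sin w)) by ring.
  apply Rmult_integral_contrapositive; split; [apply Rmult_integral_contrapositive |]; tauto.
Qed.

Lemma ellipse_sq_norm_pos (u v w : R) :
  0 < u -> v * v < u * u -> 0 < (u * cos w + v) * (u * cos w + v) + sin w * sin w.
Proof.
  intros Hu Hv; pose proof (cos_sq_add_sin_sq w) as Hw.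
  pose proof (Rle_0_sqr (u * cos w + v)); unfold Rsqr in *.
  destruct (Req_dec (sin w) 0) as [Hs | Hs].
  - rewrite Hs in *.
    assert (cos w = 1 \/ cos w = -1) as [-> | ->] by nra; nra.
  - pose proof (Rsqr_pos_lt _ Hs); unfold Rsqr in *; lra.
Qed.

Lemma arg_branch_phasor (alpha beta : R) (th : R -> R) :
  alpha < 1 -> 0 < ucoord alpha ->
  vcoord alpha beta * vcoord alpha beta < ucoord alpha * ucoord alpha ->
  arg_branch (allpass2 alpha beta) th ->
  forall w, (cos (th w), sin (th w)) = phasor (ucoord alpha * cos w + vcoord alpha beta) (sin w).
Proof.
  intros Hal Hu Hv [_ Hth] w.
  rewrite <- Hth; apply allpass2_eiw_coords; [lra |].
  apply Rgt_not_eq, ellipse_sq_norm_pos; assumption.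
Qed.

Lemma derivable_pt_lim_phase_coords (u v w0 : R) (th : R -> R) :
  continuity_pt th w0 ->
  (forall w, (cos (th w), sin (th w)) = phasor (u * cos w + v) (sin w)) ->
  let K := u * cos w0 + v in
  K * K + sin w0 * sin w0 <> 0 ->
  derivable_pt_lim th w0 (-2 * (K * cos w0 + u * (sin w0 * sin w0)) / (K * K + sin w0 * sin w0)).
Proof.
  intros Hcont Hth K HN.
  replace (K * cos w0 + u * (sin w0 * sin w0))
    with (K * cos w0 - sin w0 * (u * - sin w0)) by ring.
  apply (derivable_pt_lim_phasor_angle th (fun w => u * cos w + v) sin); try assumption.
  - apply is_derive_Reals; auto_derive; [exact I | ring].
  - apply derivable_pt_lim_sin.
Qed.

Lemma den2_pair (alpha beta x y : R) :
  den2 alpha beta (x, y) = (x * x - y * y + beta * x + alpha, 2 * x * y + beta * y).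
Proof. unfold den2, Cmult, Cplus, RtoC; simpl; f_equal; ring. Qed.

Lemma den2_eq_0 (alpha beta x y : R) :
  den2 alpha beta (x, y) = 0%C ->
  x * x - y * y + beta * x + alpha = 0 /\ 2 * x * y + beta * y = 0.
Proof. rewrite den2_pair; intros E; injection E; auto. Qed.

Lemma stable_nonreal_coeffs (alpha beta : R) :
  stable2 alpha beta -> nonreal_poles alpha beta ->
  0 < alpha < 1 /\ beta * beta < 4 * alpha.
Proof.
  intros Hst [[x y] [Hz Hy]]; simpl in Hy.
  pose proof (Hst _ Hz) as Hmod.
  apply den2_eq_0 in Hz as [Hre Him].
  assert (Hbeta : beta = -2 * x).
  { assert (Hxy : (2 * x + beta) * y = 0) by lra.
    apply Rmult_integral in Hxy as [|]; [lra | contradiction]. }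
  assert (Hy2 : 0 < y * y) by (apply (Rsqr_pos_lt _ Hy)).
  assert (Hxy1 : x * x + y * y < 1).
  { pose proof (Cmod2_alt (x, y)) as Hc; simpl in Hc; pose proof (Cmod_ge_0 (x, y)); nra. }
  subst beta; nra.
Qed.

Lemma double_pole_stable_real (alpha beta : R) :
  beta * beta = 4 * alpha -> beta * beta < 4 ->
  stable2 alpha beta /\ real_poles alpha beta.
Proof.
  intros Hdouble Hbeta.
  (* den2 alpha beta z = (z + beta/2)^2, so its only root is -beta/2 *)
  assert (Hroot : forall x y, den2 alpha beta (x, y) = 0%C -> x = - beta / 2 /\ y = 0).
  { intros x y Hz; apply den2_eq_0 in Hz as [Hre Him].
    assert (Hy : y = 0).
    { destruct (Req_dec y 0) as [| Hy]; [assumption |].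
      assert (Hxy : (2 * x + beta) * y = 0) by lra.
      apply Rmult_integral in Hxy as [Hx |]; [| contradiction]; nra. }
    subst y; split; [nra | reflexivity]. }
  split; intros [x y] Hz; destruct (Hroot x y Hz) as [-> ->]; [| reflexivity].
  change ((- beta / 2, 0) : C) with (RtoC (- beta / 2)); rewrite Cmod_R.
  apply Rabs_def1; nra.
Qed.

Lemma coords_nonreal (alpha beta : R) :
  0 < alpha < 1 -> beta * beta < 4 * alpha ->
  0 < ucoord alpha /\
  vcoord alpha beta * vcoord alpha beta < ucoord alpha * ucoord alpha - 1.
Proof.
  intros Hal Hdisc; unfold ucoord, vcoord; split.
  - apply Rdiv_lt_0_compat; lra.
  - replace ((1 + alpha) / (1 - alpha) * ((1 + alpha) / (1 - alpha)) - 1)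
      with (4 * alpha / ((1 - alpha) * (1 - alpha))) by (field; lra).
    replace (beta / (1 - alpha) * (beta / (1 - alpha)))
      with (beta * beta / ((1 - alpha) * (1 - alpha))) by (field; lra).
    apply Rmult_lt_compat_r; [apply Rinv_0_lt_compat; nra | exact Hdisc].
Qed.

Lemma coords_of_uv (u v : R) :
  0 < u ->
  (u - 1) / (u + 1) < 1 /\
  ucoord ((u - 1) / (u + 1)) = u /\ vcoord ((u - 1) / (u + 1)) (2 * v / (u + 1)) = v.
Proof.
  intros Hu; unfold ucoord, vcoord; split; [| split; field; lra].
  apply Rmult_lt_reg_r with (u + 1); [lra |].
  unfold Rdiv; rewrite Rmult_assoc, Rinv_l; lra.
Qed.

Lemma critical_uv_stable_real (u v : R) :
  0 < u -> v * v = u * u - 1 ->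
  stable2 ((u - 1) / (u + 1)) (2 * v / (u + 1)) /\
  real_poles ((u - 1) / (u + 1)) (2 * v / (u + 1)).
Proof.
  intros Hu Hcrit; apply double_pole_stable_real.
  - replace (2 * v / (u + 1) * (2 * v / (u + 1))) with (4 * (v * v) / ((u + 1) * (u + 1)))
      by (field; lra).
    rewrite Hcrit; field; lra.
  - replace (2 * v / (u + 1) * (2 * v / (u + 1))) with (4 * ((v * v) / ((u + 1) * (u + 1))))
      by (field; lra).
    assert (v * v / ((u + 1) * (u + 1)) < 1); [| lra].
    apply Rmult_lt_reg_r with ((u + 1) * (u + 1)); [nra |].
    unfold Rdiv; rewrite Rmult_assoc, Rinv_l by nra; nra.
Qed.

(* (uc, K - uc c) lies strictly inside the non-real-pole region
   v^2 < u^2 - 1 and (0, K) lies outside it, so the segment between them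
   crosses the curve v^2 = u^2 - 1 of real double poles. *)
Lemma exists_critical_u_below (K c uc : R) :
  0 < uc -> (K - uc * c) * (K - uc * c) < uc * uc - 1 ->
  exists u, 0 < u < uc /\ (K - u * c) * (K - u * c) = u * u - 1.
Proof.
  intros Huc Hin.
  set (g := fun t => t * t - 1 - (K - t * c) * (K - t * c)).
  assert (Hg : continuity g) by (unfold g; reg).
  destruct (IVT g 0 uc Hg Huc) as [u [[Hu0 Hu1] Hu]]; unfold g in *.
  - pose proof (Rle_0_sqr K); unfold Rsqr in *; lra.
  - lra.
  - exists u; split; [split |]; [| | lra].
    + destruct Hu0 as [| <-]; [assumption |].
      pose proof (Rle_0_sqr K); unfold Rsqr in *; lra.
    + destruct Hu1 as [| ->]; [assumption | lra].
Qed.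

Lemma phase_match_deriv_lt (u1 v1 u2 v2 w0 : R) (th1 th2 : R -> R) :
  continuity_pt th1 w0 -> continuity_pt th2 w0 ->
  (forall w, (cos (th1 w), sin (th1 w)) = phasor (u1 * cos w + v1) (sin w)) ->
  (forall w, (cos (th2 w), sin (th2 w)) = phasor (u2 * cos w + v2) (sin w)) ->
  u1 * cos w0 + v1 = u2 * cos w0 + v2 -> sin w0 <> 0 -> u2 < u1 ->
  (exists k : Z, th1 w0 - th2 w0 = 2 * PI * IZR k) /\
  exists d1 d2 : R,
    derivable_pt_lim th1 w0 d1 /\ derivable_pt_lim th2 w0 d2 /\ d1 < d2.
Proof.
  intros Hc1 Hc2 Hph1 Hph2 HK Hs Hu.
  set (K := u1 * cos w0 + v1) in HK.
  apply Rsqr_pos_lt in Hs; unfold Rsqr in Hs.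
  assert (HN : 0 < K * K + sin w0 * sin w0).
  { pose proof (Rle_0_sqr K); unfold Rsqr in *; lra. }
  split.
  - pose proof (Hph1 w0) as E1; pose proof (Hph2 w0) as E2.
    fold K in E1; rewrite <- HK, <- E1 in E2; injection E2; intros.
    apply cos_sin_eq_2PI; congruence.
  - do 2 eexists; split; [| split].
    + apply (derivable_pt_lim_phase_coords u1 v1 w0 th1 Hc1 Hph1), Rgt_not_eq, HN.
    + apply (derivable_pt_lim_phase_coords u2 v2 w0 th2 Hc2 Hph2).
      rewrite <- HK; apply Rgt_not_eq, HN.
    + rewrite <- HK; fold K.
      apply Rmult_lt_compat_r; [apply Rinv_0_lt_compat, HN | nra].
Qed.

Theorem lemma4 (wp alpha_c beta_c : R) :
  -PI < wp < PI -> wp <> 0 ->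
  stable2 alpha_c beta_c -> nonreal_poles alpha_c beta_c ->
  exists alpha_r beta_r : R,
    stable2 alpha_r beta_r /\ real_poles alpha_r beta_r /\
    forall theta_c theta_r : R -> R,
      arg_branch (allpass2 alpha_c beta_c) theta_c ->
      arg_branch (allpass2 alpha_r beta_r) theta_r ->
      (exists k : Z, theta_c wp - theta_r wp = 2 * PI * IZR k) /\
      exists dc dr : R,
        derivable_pt_lim theta_c wp dc /\
        derivable_pt_lim theta_r wp dr /\ dc < dr.
Proof.
  intros Hwp Hwp0 Hstab Hpoles.
  destruct (stable_nonreal_coeffs _ _ Hstab Hpoles) as [Hal Hdisc].
  destruct (coords_nonreal _ _ Hal Hdisc) as [Huc Hvc].
  set (uc := ucoord alpha_c) in *; set (vc := vcoord alpha_c beta_c) in *.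
  set (K := uc * cos wp + vc).
  destruct (exists_critical_u_below K (cos wp) uc Huc) as (ur & [Hur Hurc] & Hcrit).
  { replace (K - uc * cos wp) with vc by (unfold K; ring); exact Hvc. }
  set (vr := K - ur * cos wp) in Hcrit.
  destruct (coords_of_uv ur vr Hur) as (Halr & Hu & Hv).
  exists ((ur - 1) / (ur + 1)), (2 * vr / (ur + 1)).
  split; [| split]; try apply (critical_uv_stable_real ur vr Hur Hcrit).
  intros thc thr Hc Hr.
  assert (Hphc : forall w, (cos (thc w), sin (thc w)) = phasor (uc * cos w + vc) (sin w)).
  { apply arg_branch_phasor; [lra | exact Huc | fold uc vc; lra | exact Hc]. }
  pose proof (arg_branch_phasor _ (2 * vr / (ur + 1)) thr Halr) as Hphr; rewrite Hu, Hv in Hphr.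
  specialize (Hphr Hur ltac:(lra) Hr).
  apply (phase_match_deriv_lt uc vc ur vr wp thc thr (proj1 Hc wp) (proj1 Hr wp) Hphc Hphr);
    [unfold vr, K; ring | apply sin_neq_0_lt_PI; assumption | exact Hurc].
Qed.
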